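(* Fix $k\in[n]$ and arbitrary negotiating positions $\mu_i'\in\mathbb{R}^n$ for all $i\neq k$. For $\mu_k'\in\mathbb{R}^n$, let $M'$ be the matrix with columns $\mu_1',\dots,\mu_n'$ and $(W',P')$ the stable point for $M'$. Then the map $\mu_k'\mapsto g_k(W',P')$ is a quadratic function of $\mu_k'$ whose Hessian is negative definite.
   Context: Fix agents $[n]=\{1,\dots,n\}$. Let $\Sigma\in\mathbb{R}^{n\times n}$ be symmetric positive definite, $\Gamma=\mathrm{diag}(\gamma_1,\dots,\gamma_n)$ with all $\gamma_i>0$, and let $M\in\mathbb{R}^{n\times n}$ be the matrix of true beliefs with $i$-th column $\mu_i=Me_i$. For a matrix of reported negotiating positions $M'\in\mathbb{R}^{n\times n}$, the stable point for $M'$ is the unique pair $(W,P)$ of real $n\times n$ matrices with $W=W^T$, $P^T=-P$ and $M'-P=2\Sigma W\Gamma$; equivalently $\mathrm{vec}(W)=\tfrac12(\Gamma\otimes\Sigma+\Sigma\otimes\Gamma)^{-1}\mathrm{vec}(M'+M'^T)$ and $P=M'-2\Sigma W\Gamma$. Here $\mathrm{vec}$ stacks columns and $e_i$ is the $i$-th standard basis vector. Agent $i$'s (true) utility at $(W,P)$ is $g_i(W,P)=w_i^T(\mu_i-Pe_i)-\gamma_i\, w_i^T\Sigma w_i$, where $w_i=We_i$. *)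

From HB Require Import structures.
From mathcomp Require Import all_boot all_order all_algebra.
Set Implicit Arguments. Unset Strict Implicit. Unset Printing Implicit Defensive.
Import Order.TTheory GRing.Theory Num.Theory.
Local Open Scope ring_scope.

Section Defs.
Variables (R : realFieldType) (n : nat).

Definition spd (S : 'M[R]_n) : Prop :=
  S^T = S /\ forall v : 'cV[R]_n, v != 0 -> 0 < (v^T *m S *m v) 0 0.

Definition Gam (gamma : 'I_n -> R) : 'M[R]_n := diag_mx (\row_i gamma i).

(* The linear operator W |-> Sigma W Gamma + Gamma W Sigma, whose matrix
   (in mathcomp's row-vector mxvec convention) is Gamma (x) Sigma + Sigma (x) Gamma. *)
Definition stabOp (S : 'M[R]_n) (gamma : 'I_n -> R) (W : 'M[R]_n) : 'M[R]_n :=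
  S *m W *m Gam gamma + Gam gamma *m W *m S.

Definition stableW (S : 'M[R]_n) (gamma : 'I_n -> R) (M' : 'M[R]_n) : 'M[R]_n :=
  vec_mx (mxvec ((2%:R)^-1 *: (M' + M'^T)) *m invmx (lin_mx (stabOp S gamma))).

Definition stableP (S : 'M[R]_n) (gamma : 'I_n -> R) (M' : 'M[R]_n) : 'M[R]_n :=
  M' - 2%:R *: (S *m stableW S gamma M' *m Gam gamma).

Definition utility (S : 'M[R]_n) (gamma : 'I_n -> R) (M : 'M[R]_n) (i : 'I_n)
    (W P : 'M[R]_n) : R :=
  ((col i W)^T *m (col i M - col i P)) 0 0
  - gamma i * ((col i W)^T *m S *m col i W) 0 0.

Definition replace_col (Mo : 'M[R]_n) (k : 'I_n) (x : 'cV[R]_n) : 'M[R]_n :=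
  \matrix_(i, j) (if j == k then x i 0 else Mo i j).

End Defs.

(* Write w := W' e_k.  The stable point depends linearly on M', so w = L mu_k' + d
   is affine in mu_k', and P' e_k = mu_k' - 2 gamma_k Sigma w; hence
   g_k = w.mu_k - w.mu_k' + gamma_k w.Sigma w is quadratic in x := mu_k', with
   quadratic part gamma_k (Lx).Sigma(Lx) - (Lx).x.  For x <> 0, let W be the
   stable-point solution for x e_k^T: W is symmetric and nonzero, and pairing
   Sigma W Gamma + Gamma W Sigma = (x e_k^T + e_k x^T)/2 with W gives
   (Lx).x = 2 E(W), where E(W) = sum_j gamma_j w_j.Sigma w_j > 0.  As
   gamma_k (Lx).Sigma(Lx) is one summand of E(W), the quadratic part is at
   most -E(W) < 0. *)

From HB Require Import structures.
From mathcomp Require Import all_boot all_order all_algebra.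
From mathcomp Require Import ring lra.
Set Implicit Arguments. Unset Strict Implicit. Unset Printing Implicit Defensive.
Import Order.TTheory GRing.Theory Num.Theory.
Local Open Scope ring_scope.

Section Dot.
Variables (R : comNzRingType) (n : nat).
Implicit Types (p r s : 'cV[R]_n) (Q : 'M[R]_n).

Definition dot p r : R := (p^T *m r) 0 0.

Lemma dotDl p s r : dot (p + s) r = dot p r + dot s r.
Proof. by rewrite /dot linearD mulmxDl mxE. Qed.

Lemma dotDr p s r : dot r (p + s) = dot r p + dot r s.
Proof. by rewrite /dot mulmxDr mxE. Qed.

Lemma dotZr a p r : dot r (a *: p) = a * dot r p.
Proof. by rewrite /dot -scalemxAr mxE. Qed.

Lemma dotNr p r : dot r (- p) = - dot r p.
Proof. by rewrite -scaleN1r dotZr mulN1r. Qed.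

Lemma dotC p r : dot p r = dot r p.
Proof. by rewrite /dot -[in LHS](trmxK (p^T *m r)) trmx_mul trmxK [in LHS]mxE. Qed.

Lemma dot_mulmxr p Q r : dot p (Q *m r) = dot (Q^T *m p) r.
Proof. by rewrite /dot trmx_mul trmxK mulmxA. Qed.

End Dot.

Section QuadraticForm.
Variables (R : numFieldType) (n : nat) (a : R) (S L : 'M[R]_n).

Definition quad_mx : 'M[R]_n := a *: (L^T *m S *m L) - 2^-1 *: (L + L^T).

Lemma quad_mx_sym : S^T = S -> quad_mx^T = quad_mx.
Proof.
move=> ST; rewrite /quad_mx linearB !linearZ /= linearD /= !trmx_mul trmxK ST.
by rewrite mulmxA [L^T + L]addrC.
Qed.

Lemma quad_mxE x :
  (x^T *m quad_mx *m x) 0 0 = a * dot (L *m x) (S *m (L *m x)) - dot (L *m x) x.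
Proof.
rewrite -mulmxA -/(dot x _) /quad_mx mulmxBl -!scalemxAl mulmxDl.
rewrite !(dotDr, dotZr, dotNr) -!mulmxA !(dot_mulmxr x L^T) trmxK [dot x _]dotC.
by rewrite [2^-1 * _]mulrC mulrDl -splitr.
Qed.

Lemma affine_quadratic_form (d mu : 'cV[R]_n) : S^T = S ->
  exists (b : 'cV[R]_n) (c : R), forall x, let w := L *m x + d in
    dot w mu - dot w x + a * dot w (S *m w)
    = (x^T *m quad_mx *m x) 0 0 + (b^T *m x) 0 0 + c.
Proof.
move=> ST; exists (L^T *m mu - d + (2 * a) *: (L^T *m (S *m d))).
exists (dot d mu + a * dot d (S *m d)) => x /=.
rewrite quad_mxE -/(dot _ x) [dot (_ + _ *: _) x]dotC !(dotDr, dotNr, dotZr).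
rewrite !(dot_mulmxr x L^T) trmxK.
set y := L *m x; rewrite mulmxDr !(dotDl, dotDr).
have Sdy : dot d (S *m y) = dot y (S *m d) by rewrite dot_mulmxr ST dotC.
rewrite Sdy [dot x d]dotC; ring.
Qed.

End QuadraticForm.

Section LinearColumnMap.
Variables (R : comPzRingType) (m n : nat).

Definition colmx_of (f : 'cV[R]_n -> 'cV[R]_m) : 'M[R]_(m, n) :=
  \matrix_(i, j) f (delta_mx j 0) i 0.

Lemma mul_colmx_of (f : {linear 'cV[R]_n -> 'cV[R]_m}) x : colmx_of f *m x = f x.
Proof.
rewrite [x in RHS]matrix_sum_delta linear_sum; apply/matrixP=> i j.
rewrite (ord1 j) !mxE summxE; apply: eq_bigr => l _.
by rewrite big_ord1 linearZ !mxE mulrC.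
Qed.

End LinearColumnMap.

Section ReportedPositions.
Variables (R : realFieldType) (n : nat) (Mo : 'M[R]_n) (k : 'I_n).

Lemma replace_colE x : replace_col Mo k x = x *m delta_mx 0 k + replace_col Mo k 0.
Proof.
apply/matrixP=> i j; rewrite !mxE big_ord1 !mxE eqxx /=.
by case: (j == k); rewrite ?mulr1 ?mulr0 ?addr0 ?add0r.
Qed.

Lemma col_replace_col x : col k (replace_col Mo k x) = x.
Proof. by apply/colP=> i; rewrite !mxE eqxx. Qed.

End ReportedPositions.

Section StablePointLinear.
Variables (R : realFieldType) (n : nat) (S : 'M[R]_n) (g : 'I_n -> R).

Lemma stabOp_is_linear : linear (stabOp S g).
Proof.
move=> a W V; rewrite /stabOp !(mulmxDr, mulmxDl) -!scalemxAr -!scalemxAl scalerDr.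
by rewrite !addrA; congr (_ + _); rewrite -!addrA; congr (_ + _); rewrite addrC.
Qed.

HB.instance Definition _ :=
  GRing.isLinear.Build R 'M[R]_n 'M[R]_n *:%R (stabOp S g) stabOp_is_linear.

Lemma stableW_is_linear : linear (stableW S g).
Proof.
move=> a M N; rewrite /stableW -linearZ -linearD scalemxAl -mulmxDl -linearZ -linearD.
by congr (vec_mx (mxvec _ *m _)); apply/matrixP=> i j; rewrite !mxE; ring.
Qed.

HB.instance Definition _ :=
  GRing.isLinear.Build R 'M[R]_n 'M[R]_n *:%R (stableW S g) stableW_is_linear.

End StablePointLinear.

Section Response.
Variables (R : realFieldType) (n : nat) (S : 'M[R]_n) (g : 'I_n -> R) (k : 'I_n).

Lemma utility_stable_point M M' : let w := col k (stableW S g M') in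
  utility S g M k (stableW S g M') (stableP S g M')
  = dot w (col k M) - dot w (col k M') + g k * dot w (S *m w).
Proof.
have col_mulmx (A B : 'M[R]_n) : col k (A *m B) = A *m col k B.
  by rewrite !colE mulmxA.
have col_mulGam (A : 'M[R]_n) : col k (A *m Gam g) = g k *: col k A.
  by apply/matrixP=> i j; rewrite /Gam mxE mul_mx_diag !mxE mulrC.
move=> w; rewrite /utility /stableP [col k (_ - _)]linearB /= [col k (_ *: _)]linearZ /=.
rewrite col_mulGam col_mulmx -/w.
rewrite -!mulmxA -/(dot w _) -/(dot w (S *m w)) !(dotDr, dotNr, dotZr); ring.
Qed.

Definition response_mx : 'M[R]_n :=
  colmx_of (col k \o stableW S g \o mulmxr (delta_mx 0 k)).

Lemma response_mxE x : response_mx *m x = col k (stableW S g (x *m delta_mx 0 k)).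
Proof. exact: mul_colmx_of. Qed.

Lemma col_stableW_replace_col Mo x :
  col k (stableW S g (replace_col Mo k x))
  = response_mx *m x + col k (stableW S g (replace_col Mo k 0)).
Proof. by rewrite response_mxE replace_colE !linearD. Qed.

End Response.

Lemma outer_delta_skew_eq0 (R : numFieldType) (n : nat) (k : 'I_n) (v : 'cV[R]_n) :
  let V := v *m delta_mx 0 k in V + V^T = 0 -> v = 0.
Proof.
move=> V /matrixP VVt.
have vE i : v i 0 + (i == k)%:R * v k 0 = 0.
  by move: (VVt i k); rewrite !mxE !big_ord1 !mxE !eqxx mulr1 mulrC.
have vk : v k 0 = 0.
  by move/eqP: (vE k); rewrite eqxx mul1r -mulr2n -mulr_natl mulf_eq0 pnatr_eq0 => /eqP.
by apply/matrixP=> i j; rewrite (ord1 j) mxE -(vE i) vk mulr0 addr0.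
Qed.

Section StablePoint.
Variables (R : realFieldType) (n : nat) (S : 'M[R]_n) (g : 'I_n -> R).
Hypotheses (S_spd : spd S) (g_gt0 : forall i, 0 < g i).

Local Notation G := (Gam g).
Local Notation op := (stabOp S g).

Lemma trmx_Gam : G^T = G. Proof. by rewrite /Gam tr_diag_mx. Qed.

Lemma spd_trmx : S^T = S. Proof. by case: S_spd. Qed.

Lemma spd_dot_gt0 v : v != 0 -> 0 < dot v (S *m v).
Proof. by rewrite /dot mulmxA; case: S_spd => _; apply. Qed.

Lemma spd_dot_ge0 v : 0 <= dot v (S *m v).
Proof.
have [->|/spd_dot_gt0/ltW //] := eqVneq v 0.
by rewrite /dot !mulmx0 mxE.
Qed.

Definition energy (V : 'M[R]_n) : R := \sum_j g j * dot (col j V) (S *m col j V).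

Lemma energy_ge_term V j : g j * dot (col j V) (S *m col j V) <= energy V.
Proof.
rewrite /energy (bigD1 j) //= lerDl; apply: sumr_ge0 => i _.
by rewrite mulr_ge0 ?spd_dot_ge0 // ltW.
Qed.

Lemma energy_ge0 V : 0 <= energy V.
Proof.
by apply: sumr_ge0 => i _; rewrite mulr_ge0 ?spd_dot_ge0 // ltW.
Qed.

Lemma energy_gt0 V : V != 0 -> 0 < energy V.
Proof.
move=> /eqP V0; have [j Vj] : exists j, col j V != 0.
  apply/existsP; apply: contra_notT V0; rewrite negb_exists => /forallP Vcol.
  by apply/matrixP=> i j; move/eqP/matrixP: (negbNE (Vcol j)) => /(_ i 0); rewrite !mxE.
apply: lt_le_trans (energy_ge_term V j).
by rewrite mulr_gt0 ?spd_dot_gt0.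
Qed.

Lemma trace_energy V : \tr (V^T *m S *m V *m G) = energy V.
Proof.
apply: eq_bigr => j _; rewrite /Gam mul_mx_diag !mxE mulrC; congr (_ * _).
rewrite /dot mulmxA !mxE; apply: eq_bigr => l _; rewrite !mxE; congr (_ * _).
by apply: eq_bigr => i _; rewrite !mxE.
Qed.

Lemma trace_stabOp V : \tr (V^T *m op V) = energy V + energy V^T.
Proof.
rewrite /stabOp mulmxDr mxtraceD -!trace_energy trmxK !mulmxA; congr (_ + _).
by rewrite mxtrace_mulC !mulmxA mxtrace_mulC !mulmxA.
Qed.

Lemma stabOp_eq0 V : op V = 0 -> V = 0.
Proof.
move=> opV0; apply/eqP; apply: contraT => /energy_gt0 pos.
have := trace_stabOp V; rewrite opV0 mulmx0 linear0 => /esym/eqP.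
by rewrite paddr_eq0 ?energy_ge0 // (gt_eqF pos).
Qed.

Lemma stabOp_unitmx : lin_mx op \in unitmx.
Proof.
rewrite unitmxE unitfE; apply/negP => /det0P [v v0 vL].
have : op (vec_mx v) = 0.
  by apply: (can_inj mxvecK); rewrite -mul_vec_lin vec_mxK vL linear0.
by move/stabOp_eq0/(congr1 mxvec); rewrite vec_mxK linear0; apply/eqP.
Qed.

Lemma stabOp_stableW M' : op (stableW S g M') = 2^-1 *: (M' + M'^T).
Proof.
apply: (can_inj mxvecK); rewrite -mul_vec_lin /stableW vec_mxK mulmxKV //.
exact: stabOp_unitmx.
Qed.

Lemma stabOp_trmx V : op V^T = (op V)^T.
Proof. by rewrite /stabOp linearD /= !trmx_mul trmx_Gam spd_trmx !mulmxA addrC. Qed.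

Lemma stableW_sym M' : (stableW S g M')^T = stableW S g M'.
Proof.
apply/eqP; rewrite -subr_eq0; apply/eqP/stabOp_eq0.
rewrite linearB /= stabOp_trmx stabOp_stableW linearZ /= linearD /= trmxK.
by rewrite [M'^T + _]addrC subrr.
Qed.

Lemma stableW_eq0 M' : stableW S g M' = 0 -> M' + M'^T = 0.
Proof.
move=> W0; move: (stabOp_stableW M'); rewrite W0 linear0 => /esym/eqP.
by rewrite scalemx_eq0 invr_eq0 pnatr_eq0 => /eqP.
Qed.

Lemma trace_stableW M' : \tr (stableW S g M' *m M') = 2 * energy (stableW S g M').
Proof.
set W := stableW S g M'; have WtW : W^T = W by apply: stableW_sym.
have trWMt : \tr (W *m M'^T) = \tr (W *m M').
  by rewrite -[W in LHS]WtW -trmx_mul mxtrace_tr mxtrace_mulC.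
move: (trace_stabOp W).
rewrite WtW stabOp_stableW -scalemxAr mxtraceZ mulmxDr mxtraceD trWMt.
by rewrite [2^-1 * _]mulrC mulrDl -splitr => ->; lra.
Qed.

Lemma quad_mx_response_lt0 k (v : 'cV[R]_n) : v != 0 ->
  (v^T *m quad_mx (g k) S (response_mx S g k) *m v) 0 0 < 0.
Proof.
move=> v0; rewrite quad_mxE response_mxE.
set V := v *m delta_mx 0 k; set W := stableW S g V.
have WtW : W^T = W by apply: stableW_sym.
have trWV : \tr (W *m V) = dot (col k W) v.
  by rewrite mulmxA mxtrace_mulC trace_mx11 /dot tr_col WtW rowE mulmxA.
have W0 : W != 0.
  by apply: contra_neq v0 => /stableW_eq0; apply: outer_delta_skew_eq0.
have := energy_ge_term W k; have := energy_gt0 W0.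
rewrite -trWV trace_stableW -/W; lra.
Qed.

End StablePoint.

Theorem mainTheorem4 (R : realFieldType) (n : nat) (Sigma : 'M[R]_n)
    (gamma : 'I_n -> R) (M : 'M[R]_n) (k : 'I_n) (Mo : 'M[R]_n) :
  spd Sigma -> (forall i, 0 < gamma i) ->
  exists (A : 'M[R]_n) (b : 'cV[R]_n) (c : R),
    [/\ A^T = A,
        (forall v : 'cV[R]_n, v != 0 -> (v^T *m A *m v) 0 0 < 0) &
        (forall x : 'cV[R]_n,
           let M' := replace_col Mo k x in
           utility Sigma gamma M k (stableW Sigma gamma M') (stableP Sigma gamma M')
           = (x^T *m A *m x) 0 0 + (b^T *m x) 0 0 + c)].
Proof.
move=> Sigma_spd gamma_gt0.
pose L := response_mx Sigma gamma k.
pose d := col k (stableW Sigma gamma (replace_col Mo k 0)).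
have [b [c utilityE]] :=
  affine_quadratic_form (gamma k) L d (col k M) (spd_trmx Sigma_spd).
exists (quad_mx (gamma k) Sigma L), b, c; split.
- exact: quad_mx_sym (spd_trmx Sigma_spd).
- exact: quad_mx_response_lt0.
- move=> x M'; rewrite utility_stable_point col_replace_col.
  by rewrite col_stableW_replace_col; apply: utilityE.
Qed.
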